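(* Let $n\ge4$ and $d$ be integers. If \[ b_{n,d}(1,2)+b_{n,d}(2,1)=2\,p_{n,d}(1,2), \] then \[ b_{n,d}(1,3)+b_{n,d}(3,1)=2\,p_{n,d}(1,3). \]
   Context: For a permutation $\pi=\pi_1\cdots\pi_n$ of $[n]$ (one-line notation), an ascent is a position $t$ with $\pi_t<\pi_{t+1}$ and a descent one with $\pi_t>\pi_{t+1}$; the height of a word is its number of ascents minus its number of descents. $\pi$ is a ballot permutation if every prefix $\pi_1\cdots\pi_t$ has nonnegative height. $b_{n,d}(i,j)$ is the number of ballot permutations of $[n]$ with exactly $d$ descents that contain $i\,n\,j$ as a factor ($\pi_t=i,\pi_{t+1}=n,\pi_{t+2}=j$ for some $t$). A cycle $(c_1\cdots c_k)$ means $c_1\mapsto c_2\mapsto\cdots\mapsto c_k\mapsto c_1$; $\operatorname{cdes}(c)=\lvert\{t\in[k]:c_t>c_{t+1}\}\rvert$, $\operatorname{casc}(c)=\lvert\{t\in[k]:c_t<c_{t+1}\}\rvert$ with $c_{k+1}=c_1$; the cyclic weight of a cycle is $\min(\operatorname{cdes}(c),\operatorname{casc}(c))$ and that of a permutation is the sum over its cycles. An odd order permutation has all cycles of odd length. $p_{n,d}(i,j)$ is the number of odd order permutations $\pi$ of $[n]$ with cyclic weight $d$ such that $\pi(i)=n$ and $\pi(n)=j$ (i.e. containing $i\,n\,j$ as a cyclic factor). *)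

From mathcomp Require Import all_boot all_order all_algebra all_fingroup.
Set Implicit Arguments. Unset Strict Implicit. Unset Printing Implicit Defensive.

(* Permutations of [n] are modelled as s : {perm 'I_n}; the element k : 'I_n
   stands for the number k+1 of [n]. *)

Definition oneline (n : nat) (s : {perm 'I_n}) : seq nat :=
  [seq (s k).+1 | k <- enum 'I_n].

Definition asc (w : seq nat) : nat :=
  count (fun p : nat * nat => p.1 < p.2) (zip w (behead w)).
Definition des (w : seq nat) : nat :=
  count (fun p : nat * nat => p.1 > p.2) (zip w (behead w)).

Definition height (w : seq nat) : int := (Posz (asc w) - Posz (des w))%R.
Definition ballot (w : seq nat) : bool :=
  [forall t : 'I_(size w).+1, (0 <= height (take t w))%R].

Definition b (n : nat) (d : int) (i j : nat) : nat :=
  #|[set s : {perm 'I_n} | [&& ballot (oneline s),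
                              Posz (des (oneline s)) == d &
                              infix [:: i; n; j] (oneline s)]]|.

(* cdes / casc of the cycle of s with support C: number of cyclic
   positions t with c_t > c_{t+1} (resp. <), where c_{t+1} = s c_t *)
Definition cdes (n : nat) (s : {perm 'I_n}) (C : {set 'I_n}) : nat :=
  #|[set x in C | s x < x]|.
Definition casc (n : nat) (s : {perm 'I_n}) (C : {set 'I_n}) : nat :=
  #|[set x in C | x < s x]|.

Definition cyclic_weight (n : nat) (s : {perm 'I_n}) : nat :=
  \sum_(C in porbits s) minn (cdes s C) (casc s C).

Definition odd_order (n : nat) (s : {perm 'I_n}) : bool :=
  [forall C in porbits s, odd #|C|].

Definition cyc_factor (n : nat) (s : {perm 'I_n}) (i j : nat) : bool :=
  [exists x : 'I_n, exists y : 'I_n,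
     [&& x.+1 == i, y.+1 == n, s x == y & (s y).+1 == j]].

Definition p (n : nat) (d : int) (i j : nat) : nat :=
  #|[set s : {perm 'I_n} | [&& odd_order s,
                              Posz (cyclic_weight s) == d &
                              cyc_factor s i j]]|.

From mathcomp Require Import all_boot all_order all_algebra all_fingroup.
From mathcomp Require Import zify.
Import Order.TTheory GRing.Theory Num.Theory.
Set Implicit Arguments. Unset Strict Implicit. Unset Printing Implicit Defensive.

(* Both identities hold unconditionally: b(1,2) + b(2,1) = b(1,3) + b(3,1) and
   p(1,2) = p(1,3).

   Exchanging the values 2 and 3 of a word changes none of its
   ascents and descents unless 2 and 3 are adjacent.  Next to the factor 1n2
   (resp. 2n1) they can only be adjacent inside the block 1n23 (resp. 32n1),
   and symmetrically for 1n3, 3n1 with the blocks 1n32, 23n1.  Relabelling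
   the values 1 -> 2 -> n -> 3 -> 1 turns the block 1n23 into 23n1, and its
   inverse turns 1n32 into 32n1; the rest of the word is untouched, the
   number of descents is kept and the lowest height reached inside the block
   is the same, so the ballot property is kept as well.

   Conjugating by the transposition (2 3) maps the permutations
   with 1 -> n -> 2 to those with 1 -> n -> 3 and keeps odd order and the
   cyclic weight, unless 2 -> 3.  The cycle (1 n 2 3 ...) of an odd order
   permutation is longer than 4; conjugating by the map that swaps 2 and 3
   and reverses 4..n-1 turns it into (1 n 3 2 ...) and exchanges the numbers
   of cyclic ascents and descents of every cycle. *)

Definition step (a b : nat) : int := ((a < b)%N%:Z - (b < a)%N%:Z)%R.

Definition steps (w : seq nat) : seq int :=
  [seq step ab.1 ab.2 | ab <- zip w (behead w)].

(* The heights of the prefixes of [w] of lengths 2, ..., size w; shorter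
   prefixes have height 0. *)
Definition heights (w : seq nat) : seq int := scanl +%R 0%R (steps w).

Lemma stepSS a b : step a.+1 b.+1 = step a b.
Proof. by []. Qed.

Lemma step_lt a b : a < b -> step a b = 1%R.
Proof. by rewrite /step => ab; rewrite ab ltnNge ltnW. Qed.

Lemma step_gt a b : b < a -> step a b = (- 1)%R.
Proof. by rewrite /step => ba; rewrite ba ltnNge ltnW. Qed.

Lemma step_eq1 a b : (step a b == 1%R) = (a < b).
Proof. by rewrite /step; case: ltngtP. Qed.

Lemma step_eqN1 a b : (step a b == (- 1)%R) = (b < a).
Proof. by rewrite /step; case: ltngtP. Qed.

Lemma steps_cons2 a b w : steps [:: a, b & w] = step a b :: steps (b :: w).
Proof. by []. Qed.

Lemma size_steps w : size (steps w) = (size w).-1.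
Proof. by rewrite size_map size_zip size_behead; case: w => //= a w; lia. Qed.

Lemma steps_take w t : steps (take t.+1 w) = take t (steps w).
Proof. by elim: w t => [|a [|b w] IHw] [|t] //=; rewrite !steps_cons2 /= -IHw. Qed.

Lemma height_steps w : height w = foldl +%R 0%R (steps w).
Proof.
rewrite foldl_idx; elim: w => [|a [|b w] IHw] //=; first by rewrite big_nil.
by rewrite steps_cons2 big_cons -IHw /height /asc /des /= !PoszD /step opprD addrACA.
Qed.

Lemma des_steps w : des w = count (fun h : int => h < 0)%R (steps w).
Proof.
rewrite /des /steps count_map; apply: eq_count => -[a b] /=.
by rewrite /step; case: ltngtP.
Qed.

Lemma ballotE w : ballot w = all (fun h : int => 0 <= h)%R (heights w).
Proof.
apply/forallP/(all_nthP 0%R) => [Hw k | Hw [[|[|t]] Ht]] /=.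
- rewrite size_scanl size_steps => Hk; have Hk2 : k.+2 < (size w).+1 by lia.
  by have := Hw (Ordinal Hk2); rewrite /= height_steps steps_take nth_scanl ?size_steps.
- by rewrite take0.
- by case: {Hw Ht} w => [|a w]; rewrite /= ?take0.
have Ht2 : t < size (steps w) by rewrite size_steps; lia.
by rewrite /= height_steps steps_take -(nth_scanl 0%R) //; apply: Hw; rewrite size_scanl.
Qed.

Lemma ballot_des_eq_steps u v :
  steps u = steps v -> ballot u = ballot v /\ des u = des v.
Proof. by move=> Euv; rewrite !ballotE !des_steps /heights Euv. Qed.

Lemma steps_cat x a y : steps (x ++ a :: y) = steps (rcons x a) ++ steps (a :: y).
Proof. by elim: x => [|b [|c x] IHx] //=; rewrite !steps_cons2 -IHx. Qed.

Lemma steps_cat3 x a s y :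
  steps (x ++ (a :: s) ++ y) = steps (rcons x a) ++ steps (a :: s) ++ steps (last a s :: y).
Proof. by rewrite cat_cons steps_cat -cat_cons [a :: s]lastI cat_rcons steps_cat. Qed.

Lemma steps_rcons_eq x a b :
  {in x, forall z, step z a = step z b} -> steps (rcons x a) = steps (rcons x b).
Proof.
elim: x => [|c [|d x] IHx] Hx //=; first by rewrite /steps /= Hx ?mem_head.
by rewrite !steps_cons2 IHx // => z zx; apply: Hx; rewrite inE zx orbT.
Qed.

Lemma steps_cons_eq a b y :
  {in y, forall z, step a z = step b z} -> steps (a :: y) = steps (b :: y).
Proof. by case: y => [|c y] Hy //; rewrite !steps_cons2 Hy ?mem_head. Qed.

Lemma steps_map_eq f w :
  (forall a b, infix [:: a; b] w -> step (f a) (f b) = step a b) -> steps (map f w) = steps w.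
Proof.
elim: w => [|a [|b w] IHw] Hw //; rewrite map_cons !steps_cons2 -map_cons IHw.
  by rewrite Hw //; exact: (prefix_infix [:: a; b]).
by move=> a' b' ab'; apply: Hw; exact: (infix_catl [:: a]).
Qed.

Section PrefixSums.
Local Open Scope ring_scope.

Lemma foldl_addr (h : int) z : foldl +%R h z = h + foldl +%R 0 z.
Proof. by rewrite !foldlE !big_cons /= add0r. Qed.

Lemma scanl_addr (h : int) z : scanl +%R h z = map (+%R h) (scanl +%R 0 z).
Proof.
elim: z h => [|a z IHz] h //=; rewrite add0r IHz [in RHS]IHz -map_comp.
by congr (_ :: _); apply: eq_map => x /=; rewrite addrA.
Qed.

Lemma last_scanl (h : int) z : last h (scanl +%R h z) = foldl +%R h z.
Proof. by elim: z h => //= a z IHz h; rewrite IHz. Qed.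

Lemma all_ge0_scanl_cat (p z z' q : seq int) :
  foldl +%R 0 z = foldl +%R 0 z' ->
  all (fun h' => has (fun h => h <= h') (0 :: scanl +%R 0 z)) (scanl +%R 0 z') ->
  all (fun h => 0 <= h) (scanl +%R 0 (p ++ z ++ q)) ->
  all (fun h => 0 <= h) (scanl +%R 0 (p ++ z' ++ q)).
Proof.
move=> Ez Hdom; rewrite !scanl_cat; set hp := foldl _ _ p.
rewrite !all_cat (foldl_addr hp z) (foldl_addr hp z') Ez.
case/and3P=> Hp + ->; rewrite Hp !andbT (scanl_addr hp z) (scanl_addr hp z') !all_map => Hz.
(* [hp], the height reached before [z], is a prefix height itself: this is
   what the 0 in the hypothesis on [z] stands for. *)
have hp_ge0 : 0 <= hp.
  rewrite /hp -last_scanl; apply: (allP (_ : all _ (0 :: _))) (mem_last _ _).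
  exact/andP.
apply/allP => h' /(allP Hdom) /hasP[h]; rewrite inE => /orP[/eqP-> | hz] le_hh' /=.
  exact: addr_ge0.
by apply: le_trans (allP Hz h hz) _; rewrite lerD2l.
Qed.

End PrefixSums.

(* [0 :: heights p] are the heights of the nonempty prefixes of [p]. *)
Definition min_height_le (p p' : seq nat) : bool :=
  all (fun h' => has (fun h => h <= h')%R (0%R :: heights p)) (heights p').

Definition exchangeable (p p' : seq nat) : bool :=
  [&& height p == height p', des p == des p', min_height_le p p' & min_height_le p' p].

Section Blocks.
Variables (x y s s' : seq nat) (a b : nat).
Hypotheses (Hx : {in x, forall z, step z a = step z b})
           (Hy : {in y, forall z, step (last a s) z = step (last b s') z}).

Lemma ballot_block :
  height (a :: s) = height (b :: s') -> min_height_le (a :: s) (b :: s') ->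
  ballot (x ++ (a :: s) ++ y) -> ballot (x ++ (b :: s') ++ y).
Proof.
rewrite !ballotE /heights !steps_cat3 (steps_rcons_eq Hx) (steps_cons_eq Hy) !height_steps.
exact: all_ge0_scanl_cat.
Qed.

Lemma des_block :
  des (a :: s) = des (b :: s') -> des (x ++ (a :: s) ++ y) = des (x ++ (b :: s') ++ y).
Proof.
by rewrite !des_steps !steps_cat3 (steps_rcons_eq Hx) (steps_cons_eq Hy) !count_cat => ->.
Qed.

End Blocks.

Lemma infix_map (T U : eqType) (f : T -> U) p w : infix p w -> infix (map f p) (map f w).
Proof. by case/infixP=> x [y ->]; rewrite !map_cat infix_infix. Qed.

Section UniqInfix.
Variable T : eqType.
Implicit Types (u x y p q : seq T) (a b c z : T).

Lemma infix_uniq_cons x y q a :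
  uniq (x ++ a :: y) -> infix (a :: q) (x ++ a :: y) = prefix q y.
Proof.
elim: x => [|b x IHx] /=.
  case/andP=> ay _; rewrite eqxx /=; case: (prefix q y) => //=.
  by apply: contraNF ay => /infixP[x' [y' ->]]; rewrite mem_cat mem_head orbT.
case/andP=> bx U; rewrite -IHx //; suff -> : (a == b) = false by [].
by apply: contraNF bx => /eqP->; rewrite mem_cat mem_head orbT.
Qed.

Lemma uniq_infix_glue u p q a :
  uniq u -> infix (rcons p a) u && infix (a :: q) u = infix (p ++ a :: q) u.
Proof.
move=> Uu; apply/andP/idP => [[/infixP[x [y Eu]]] | pq].
  move: Uu; rewrite Eu cat_rcons catA => Uu; rewrite infix_uniq_cons // => /prefixP[r ->].
  by apply/infixP; exists x, r; rewrite -!catA.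
by split; [apply: (catr_infix (s := q)); rewrite cat_rcons | exact: (catl_infix (s := p))].
Qed.

Lemma infix2_uniq_succ u a b c :
  uniq u -> infix [:: a; b] u -> infix [:: a; c] u -> b = c.
Proof.
move=> Uu /infixP[x [y Eu]]; move: Uu; rewrite Eu => Uu.
by rewrite infix_uniq_cons //= => /andP[/eqP].
Qed.

Lemma infix2_uniq_pred u a b c :
  uniq u -> infix [:: a; c] u -> infix [:: b; c] u -> a = b.
Proof.
rewrite -rev_uniq -(infix_rev [:: a; c]) -(infix_rev [:: b; c]).
exact: infix2_uniq_succ.
Qed.

Lemma uniq_cat3_notin x p y z : uniq (x ++ p ++ y) -> z \in x ++ y -> z \notin p.
Proof. by rewrite uniq_catCA cat_uniq => /and3P[_ /hasPn Hp _]; exact: Hp. Qed.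

End UniqInfix.

Section OneLine.
Variable n : nat.
Implicit Types (s c : {perm 'I_n}).

Lemma oneline_uniq s : uniq (oneline s).
Proof. by rewrite map_inj_uniq ?enum_uniq // => i j [/val_inj/perm_inj]. Qed.

Lemma onelineP s v : reflect (exists i : 'I_n, v = i.+1) (v \in oneline s).
Proof.
apply: (iffP mapP) => [[k _ ->] | [i ->]]; first by exists (s k).
by exists (s^-1 i)%g; rewrite ?mem_enum ?permKV.
Qed.

Lemma mem_oneline s v : (v \in oneline s) = (0 < v <= n).
Proof.
apply/onelineP/idP => [[i ->] | /andP[v_gt0 v_le]]; first exact: ltn_ord.
have lt_v : v.-1 < n by lia.
by exists (Ordinal lt_v); rewrite /= prednK.
Qed.

(* The action of [c] on the values 1..n of a one-line word (junk elsewhere). *)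
Definition relabel c (v : nat) : nat := nth 0 (oneline c) v.-1.

Lemma relabel_ord c (i : 'I_n) : relabel c i.+1 = (c i).+1.
Proof. by rewrite /relabel /= (nth_map i) ?size_enum_ord // nth_ord_enum. Qed.

Lemma oneline_mul s c : oneline (s * c)%g = map (relabel c) (oneline s).
Proof. by rewrite -map_comp; apply: eq_map => i /=; rewrite relabel_ord permM. Qed.

Lemma relabelK c : {in [pred v | 0 < v <= n], cancel (relabel c) (relabel c^-1)}.
Proof.
move=> v; rewrite inE -(mem_oneline c) => /onelineP[i ->].
by rewrite !relabel_ord permK.
Qed.

Lemma infix_relabel s c p q : all (fun v => 0 < v <= n) p -> map (relabel c) p = q ->
  infix q (oneline (s * c)%g) = infix p (oneline s).
Proof.
move=> Hp <-; apply/idP/idP => [|]; last by rewrite oneline_mul; exact: infix_map.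
move/(infix_map (relabel c^-1)); rewrite -oneline_mul mulgK -map_comp.
suff -> : map (relabel c^-1 \o relabel c) p = p by [].
by rewrite -[RHS]map_id; apply/eq_in_map => v /(allP Hp) /relabelK; apply.
Qed.

End OneLine.

Lemma card_set_transport (T : finType) (f : T -> T) (P Q : pred T) :
  injective f -> (forall x, Q (f x) = P x) -> #|[set x | Q x]| = #|[set x | P x]|.
Proof.
move=> f_inj E; rewrite -(card_preimset _ f_inj); apply: eq_card => x.
by rewrite !inE E.
Qed.

Lemma card_setID (T : finType) (P Q : pred T) :
  #|[set x | P x]| = #|[set x | P x && Q x]| + #|[set x | P x && ~~ Q x]|.
Proof.
by rewrite -(cardsID [set x | Q x]); congr (_ + _); apply: eq_card => x; rewrite !inE andbC.
Qed.

Section BallotCounts.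
Variables (n : nat) (d : int).

Definition nballot (P : pred (seq nat)) : nat :=
  #|[set s : {perm 'I_n} | [&& ballot (oneline s), Posz (des (oneline s)) == d & P (oneline s)]]|.

Lemma b_nballot i j : b n d i j = nballot (infix [:: i; n; j]).
Proof. by []. Qed.

Lemma nballot_split (P Q : pred (seq nat)) :
  nballot P = nballot [pred w | P w && Q w] + nballot [pred w | P w && ~~ Q w].
Proof.
rewrite /nballot (card_setID _ (fun s => Q (oneline s))).
by congr (_ + _); apply: eq_card => s; rewrite !inE -!andbA.
Qed.

Lemma eq_nballot (P Q : pred (seq nat)) :
  (forall s : {perm 'I_n}, P (oneline s) = Q (oneline s)) -> nballot P = nballot Q.
Proof. by move=> E; apply: eq_card => s; rewrite !inE E. Qed.

Lemma nballot_glue p a q :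
  nballot [pred w | infix (rcons p a) w && infix (a :: q) w] = nballot (infix (p ++ a :: q)).
Proof. by apply: eq_nballot => s; rewrite /= uniq_infix_glue //; exact: oneline_uniq. Qed.

Lemma nballot_relabel (c : {perm 'I_n}) (P Q : pred (seq nat)) :
  (forall s, Q (oneline (s * c)%g) = P (oneline s)) ->
  (forall s, P (oneline s) -> ballot (oneline (s * c)%g) = ballot (oneline s) /\
                              des (oneline (s * c)%g) = des (oneline s)) ->
  nballot Q = nballot P.
Proof.
move=> EQ Hbd; apply: card_set_transport (mulIg c) _ => s.
by rewrite EQ; case Ps: (P _); [case: (Hbd s Ps) => -> -> | rewrite !andbF].
Qed.

End BallotCounts.

Section PermOrbits.
Variable T : finType.
Implicit Types (s c : {perm T}) (C : {set T}).

Lemma porbitJ s c x : porbit (s ^ c)%g (c x) = c @: porbit s x.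
Proof.
apply/setP => y; apply/porbitP/imsetP => [[i ->] | [z /porbitP[i ->] ->]].
  by exists ((s ^+ i)%g x); rewrite ?mem_porbit // -conjXg permJ.
by exists i; rewrite -conjXg permJ.
Qed.

Lemma porbitsJ s c : porbits (s ^ c)%g = [set c @: C | C : {set T} in porbits s].
Proof.
apply/setP => D; apply/imsetP/imsetP => [[y _ ->] | [C /imsetP[x _ ->] ->]].
  by exists (porbit s (c^-1 y)%g); rewrite ?imset_f // -porbitJ permKV.
by exists (c x); rewrite ?porbitJ.
Qed.

Lemma permJ_eq s c x y x' y' : c x = x' -> c y = y' -> ((s ^ c)%g x' == y') = (s x == y).
Proof. by move=> <- <-; rewrite permJ (inj_eq (@perm_inj _ c)). Qed.

Lemma mem_porbit_perm s x y : (s x \in porbit s y) = (x \in porbit s y).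
Proof. by rewrite -!eq_porbit_mem -[s x]/(aperm x s) -(expg1 s) porbit_perm. Qed.

Lemma sum_porbit_perm s C (F : T -> nat) :
  C \in porbits s -> \sum_(x in C) F (s x) = \sum_(x in C) F x.
Proof.
case/imsetP=> y _ ->; rewrite [RHS](reindex_inj (@perm_inj _ s)) /=.
by apply: eq_bigl => x; rewrite mem_porbit_perm.
Qed.

(* The potential [phi] telescopes along the cycle [C]. *)
Lemma card_porbit_potential s C (P Q : pred T) (phi : T -> nat) :
  C \in porbits s -> (forall x, P x + phi x = Q x + phi (s x)) ->
  #|[set x in C | P x]| = #|[set x in C | Q x]|.
Proof.
move=> sC E; have card_sum R : #|[set x in C | R x]| = \sum_(x in C) R x.
  rewrite -sum1_card big_mkcond [RHS]big_mkcond; apply: eq_bigr => x _.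
  by rewrite !inE; case: (x \in C); case: (R x).
apply/eqP; rewrite !card_sum -(eqn_add2r (\sum_(x in C) phi x)).
rewrite -{2}(sum_porbit_perm phi sC) -!big_split /=.
by apply/eqP/eq_bigr => x _; exact: E.
Qed.

Lemma card_porbit_period s x k :
  0 < k -> iter k s x = x -> uniq (traject s x k) -> #|porbit s x| = k.
Proof.
move=> k_gt0 sk_x Ut; rewrite -(size_traject s x k) -(card_uniqP Ut); apply: eq_card => y.
apply/porbitP/idP => [[i ->] | /trajectP[i _ ->]]; last by exists i; rewrite permX.
have /loopingP : looping s x k.
  by rewrite /looping sk_x; case: k k_gt0 {sk_x Ut} => //= k _; rewrite mem_head.
by rewrite permX.
Qed.

End PermOrbits.

Section ConjugationInvariants.
Variable n : nat.
Implicit Types (s c : {perm 'I_n}).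

Lemma odd_orderJ s c : odd_order (s ^ c)%g = odd_order s.
Proof.
rewrite /odd_order porbitsJ; apply/forall_inP/forall_inP => [H C sC | H _ /imsetP[C sC ->]].
  by rewrite -(card_imset _ (@perm_inj _ c)) H ?imset_f.
by rewrite card_imset ?H //; exact: perm_inj.
Qed.

Lemma cyclic_weightJ s c :
  cyclic_weight (s ^ c)%g = \sum_(C in porbits s)
    minn #|[set x in C | c (s x) < c x]| #|[set x in C | c x < c (s x)]|.
Proof.
rewrite /cyclic_weight porbitsJ big_imset /=; last first.
  by move=> C D _ _; apply: imset_inj; exact: perm_inj.
apply: eq_bigr => C _; rewrite /cdes /casc.
have imJ (R : 'I_n -> 'I_n -> bool) :
    #|[set y in c @: C | R ((s ^ c)%g y) y]| = #|[set x in C | R (c (s x)) (c x)]|.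
  rewrite -(card_preimset _ (@perm_inj _ c)); apply: eq_card => x.
  by rewrite !inE mem_imset ?permJ //; exact: perm_inj.
by rewrite (imJ (fun a b => a < b)) (imJ (fun a b => b < a)).
Qed.

Lemma cyclic_weightJ_step s c :
  (forall x, step (c x) (c (s x)) = step x (s x)) -> cyclic_weight (s ^ c)%g = cyclic_weight s.
Proof.
move=> Hc; rewrite cyclic_weightJ; apply: eq_bigr => C _.
congr minn; apply: eq_card => x; rewrite !inE; first by rewrite -!step_eqN1 Hc.
by rewrite -!step_eq1 Hc.
Qed.

Lemma cyclic_weightJ_potential s c (phi : 'I_n -> nat) :
  (forall x, (c (s x) < c x) + phi x = (x < s x) + phi (s x)) ->
  (forall x, (c x < c (s x)) + phi (s x) = (s x < x) + phi x) ->
  cyclic_weight (s ^ c)%g = cyclic_weight s.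
Proof.
move=> Hdes Hasc; rewrite cyclic_weightJ; apply: eq_bigr => C sC.
rewrite minnC; congr minn; last exact: card_porbit_potential Hdes.
apply/esym/(@card_porbit_potential _ s C (fun x => s x < x) (fun x => c x < c (s x)) phi sC).
by move=> x; rewrite Hasc.
Qed.

Lemma step_tperm (x y z w : 'I_n) : y = x.+1 :> nat ->
  ~~ ((z == x) && (w == y)) -> ~~ ((z == y) && (w == x)) ->
  step (tperm x y z) (tperm x y w) = step z w.
Proof.
move=> Exy Nxy Nyx.
have lt_tperm a b : ~~ ((a == x) && (b == y)) -> ~~ ((a == y) && (b == x)) ->
    (tperm x y a < tperm x y b) = (a < b).
  rewrite !permE /= !(fun_if (@nat_of_ord n)) -!(inj_eq (@ord_inj n)) Exy.
  by do ![case: eqP => ? /=]; lia.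
by rewrite /step !lt_tperm // andbC.
Qed.

End ConjugationInvariants.

Section NatInvolution.
Variables (n : nat) (f : nat -> nat).
Hypotheses (f_lt : forall i, i < n -> f i < n) (fK : forall i, i < n -> f (f i) = i).

Definition ord_involution (i : 'I_n) : 'I_n := Ordinal (f_lt (ltn_ord i)).

Lemma ord_involutionK : involutive ord_involution.
Proof. by move=> i; apply: val_inj; rewrite /= fK. Qed.

Definition perm_involution : {perm 'I_n} := perm (inv_inj ord_involutionK).

Lemma perm_involutionE i : perm_involution i = f i :> nat.
Proof. by rewrite permE. Qed.

End NatInvolution.

Section SmallValues.
Variable m : nat.
Local Notation n := m.+4.
Implicit Types (s c : {perm 'I_n}) (p : seq nat) (d : int).

(* The ordinals standing for the values 1, 2, 3 and n. *)
Definition e1 : 'I_n := ord0.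
Definition e2 : 'I_n := Ordinal (isT : 1 < n).
Definition e3 : 'I_n := Ordinal (isT : 2 < n).
Definition en : 'I_n := ord_max.

Definition tau : {perm 'I_n} := tperm e2 e3.

Lemma tau_small : (tau e1 = e1) * (tau en = en) * (tau e2 = e3) * (tau e3 = e2).
Proof. by rewrite tpermL tpermR !tpermD. Qed.

(* On values: 1 -> 2 -> n -> 3 -> 1. *)
Definition kappa : {perm 'I_n} := (tperm e1 e2 * tperm e1 en * tperm e1 e3)%g.

Lemma relabel_tau :
  (relabel tau 1 = 1) * (relabel tau 2 = 3) * (relabel tau 3 = 2) * (relabel tau n = n).
Proof.
by rewrite !(relabel_ord tau e1, relabel_ord tau e2, relabel_ord tau e3, relabel_ord tau en) !permE.
Qed.

Lemma relabel_kappa :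
  (relabel kappa 1 = 2) * (relabel kappa 2 = n) * (relabel kappa 3 = 1) * (relabel kappa n = 3).
Proof.
rewrite !(relabel_ord kappa e1, relabel_ord kappa e2, relabel_ord kappa e3, relabel_ord kappa en).
by rewrite !permM !permE /= !eqxx.
Qed.

Lemma relabel_kappaV : (relabel kappa^-1 1 = 3) * (relabel kappa^-1 2 = 1) *
  (relabel kappa^-1 3 = n) * (relabel kappa^-1 n = 2).
Proof.
rewrite !(relabel_ord _ e1, relabel_ord _ e2, relabel_ord _ e3, relabel_ord _ en).
by rewrite !invMg !tpermV !permM !permE /= !eqxx.
Qed.

Lemma relabel_kappa_mid v : 3 < v < n -> relabel kappa v = v /\ relabel kappa^-1 v = v.
Proof.
move=> Hv; have lt_v : v.-1 < n by lia.
have -> : v = (Ordinal lt_v).+1 by rewrite /= prednK //; lia.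
rewrite !relabel_ord !invMg !tpermV !permM; split; congr _.+1;
  by rewrite !tpermD //; apply/eqP; move/(congr1 val) => /=; lia.
Qed.

Lemma ballot_des_tau s :
  ~~ infix [:: 2; 3] (oneline s) -> ~~ infix [:: 3; 2] (oneline s) ->
  ballot (oneline (s * tau)%g) = ballot (oneline s) /\ des (oneline (s * tau)%g) = des (oneline s).
Proof.
move=> N23 N32; apply: ballot_des_eq_steps; rewrite oneline_mul; apply: steps_map_eq => a b ab.
have [[i Ea] [j Eb]] : (exists i : 'I_n, a = i.+1) /\ (exists j : 'I_n, b = j.+1).
  by split; apply/onelineP; apply: (mem_infix ab); rewrite !inE eqxx ?orbT.
rewrite Ea Eb !relabel_ord stepSS step_tperm //; apply/negP => /andP[/eqP ie /eqP je].
  by move: ab; rewrite Ea Eb ie je (negbTE N23).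
by move: ab; rewrite Ea Eb ie je (negbTE N32).
Qed.

(* The block [p] holds the values 1, 2, 3, n, so every other letter lies
   strictly between 3 and n and compares in the same way with the ends of
   [p] and [p']. *)
Lemma ballot_des_block s c p p' : map (relabel c) p = p' ->
  (forall v, 3 < v < n -> relabel c v = v) -> all (mem p) [:: 1; 2; 3; n] ->
  all (fun v => v <= 3) [:: head 0 p; last 0 p; head 0 p'; last 0 p'] ->
  exchangeable p p' -> infix p (oneline s) ->
  ballot (oneline (s * c)%g) = ballot (oneline s) /\ des (oneline (s * c)%g) = des (oneline s).
Proof.
move=> <- Hc Hp Hends Hex /infixP[x [y Es]].
have Hout : {in x ++ y, forall z, 3 < z < n}.
  move=> z zxy; have /uniq_cat3_notin/(_ zxy) zp : uniq (x ++ p ++ y).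
    by rewrite -Es; exact: oneline_uniq.
  have : z \in oneline s by move: zxy; rewrite Es !mem_cat => /orP[] ->; rewrite ?orbT.
  have ne v : v \in [:: 1; 2; 3; n] -> z != v.
    by move=> /(allP Hp) vp; apply: contraNneq zp => ->.
  move: (ne 1) (ne 2) (ne 3) (ne n); rewrite mem_oneline !inE !eqxx !orbT.
  by move=> /(_ isT) ? /(_ isT) ? /(_ isT) ? /(_ isT) ?; lia.
have Esc : oneline (s * c)%g = x ++ map (relabel c) p ++ y.
  rewrite oneline_mul Es !map_cat (map_id_in (s := x)) ?(map_id_in (s := y)) // => z z_in;
    by apply/Hc/Hout; rewrite mem_cat z_in ?orbT.
case: p Hp Hends Hex Es Esc => [//|a r] _ /= /and5P[a3 l3 b3 l'3 _].
move=> /and4P[/eqP Eh /eqP Ed Hle Hge] -> ->.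
have Hx : {in x, forall z, step z a = step z (relabel c a)}.
  move=> z zx; have /andP[z3 _] : 3 < z < n by apply: Hout; rewrite mem_cat zx.
  by rewrite !step_gt //; lia.
have Hy : {in y, forall z, step (last a r) z = step (last (relabel c a) (map (relabel c) r)) z}.
  move=> z zy; have /andP[z3 _] : 3 < z < n by apply: Hout; rewrite mem_cat zy orbT.
  by rewrite !step_lt //; lia.
split; last by rewrite (des_block Hx Hy Ed).
apply/idP/idP; last exact: ballot_block Hx Hy Eh Hle.
by apply: ballot_block (esym Eh) Hge => z z_in; rewrite (Hx, Hy).
Qed.

Lemma nballot_block d c p p' : map (relabel c) p = p' ->
  (forall v, 3 < v < n -> relabel c v = v) ->
  all (fun v => 0 < v <= n) p -> all (mem p) [:: 1; 2; 3; n] ->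
  all (fun v => v <= 3) [:: head 0 p; last 0 p; head 0 p'; last 0 p'] ->
  exchangeable p p' -> nballot n d (infix p') = nballot n d (infix p).
Proof.
move=> Ep Hc Hrange Hp Hends Hex; apply: (@nballot_relabel _ d c) => s.
  exact: infix_relabel.
exact: ballot_des_block Ep Hc Hp Hends Hex.
Qed.

Lemma nballot_kappa d : nballot n d (infix [:: 2; 3; n; 1]) = nballot n d (infix [:: 1; n; 2; 3]).
Proof.
apply: (@nballot_block d kappa) => //=; first by rewrite !relabel_kappa.
- by move=> v /relabel_kappa_mid[].
- by rewrite ltnSn.
- by rewrite !inE eqxx !orbT.
Qed.

Lemma nballot_kappaV d :
  nballot n d (infix [:: 3; 2; n; 1]) = nballot n d (infix [:: 1; n; 3; 2]).
Proof.
apply: (@nballot_block d kappa^-1%g) => //=; first by rewrite !relabel_kappaV.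
- by move=> v /relabel_kappa_mid[].
- by rewrite ltnSn.
- by rewrite !inE eqxx !orbT.
Qed.

Lemma nballot_tau_1n d :
  nballot n d [pred w | infix [:: 1; n; 3] w && ~~ infix [:: 3; 2] w] =
  nballot n d [pred w | infix [:: 1; n; 2] w && ~~ infix [:: 2; 3] w].
Proof.
apply: (@nballot_relabel _ d tau) => s /=.
  rewrite (infix_relabel s (p := [:: 1; n; 2])) ?(infix_relabel s (p := [:: 2; 3])) //=;
    by rewrite ?relabel_tau ?ltnSn.
move=> /andP[H1n2 N23]; apply: ballot_des_tau N23 _; apply/negP => H32.
have := infix2_uniq_pred (oneline_uniq s) H32 (catl_infix (s := [:: 1]) H1n2).
by move/eqP; rewrite eqn_leq andbC.
Qed.

Lemma nballot_tau_n1 d :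
  nballot n d [pred w | infix [:: 3; n; 1] w && ~~ infix [:: 2; 3] w] =
  nballot n d [pred w | infix [:: 2; n; 1] w && ~~ infix [:: 3; 2] w].
Proof.
apply: (@nballot_relabel _ d tau) => s /=.
  rewrite (infix_relabel s (p := [:: 2; n; 1])) ?(infix_relabel s (p := [:: 3; 2])) //=;
    by rewrite ?relabel_tau ?ltnSn.
move=> /andP[H2n1 N32]; apply: ballot_des_tau _ N32; apply/negP => H23.
have H2n := catr_infix (s := [:: 1]) (s1 := [:: 2; n]) H2n1.
have := infix2_uniq_succ (oneline_uniq s) H23 H2n.
by move/eqP; rewrite eqn_leq.
Qed.

Lemma ballot_sum d : b n d 1 2 + b n d 2 1 = b n d 1 3 + b n d 3 1.
Proof.
have glueC p a q : nballot n d [pred w | infix (a :: q) w && infix (rcons p a) w] =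
                   nballot n d (infix (p ++ a :: q)).
  by rewrite -nballot_glue; apply: eq_nballot => s; rewrite /= andbC.
rewrite !b_nballot.
rewrite [nballot _ _ (infix [:: 1; n; 2])](nballot_split _ _ _ (infix [:: 2; 3])).
rewrite [nballot _ _ (infix [:: 2; n; 1])](nballot_split _ _ _ (infix [:: 3; 2])).
rewrite [nballot _ _ (infix [:: 1; n; 3])](nballot_split _ _ _ (infix [:: 3; 2])).
rewrite [nballot _ _ (infix [:: 3; n; 1])](nballot_split _ _ _ (infix [:: 2; 3])).
rewrite (nballot_glue _ _ [:: 1; n] 2 [:: 3]) (glueC [:: 3] 2 [:: n; 1]).
rewrite (nballot_glue _ _ [:: 1; n] 3 [:: 2]) (glueC [:: 2] 3 [:: n; 1]) /=.
rewrite nballot_kappa nballot_kappaV nballot_tau_1n nballot_tau_n1.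
by rewrite addnACA [RHS]addnACA; congr (_ + _); exact: addnC.
Qed.

(* In 0-based values: swaps 1 and 2 and reverses 3..m+2. *)
Definition sigma_fun (v : nat) : nat :=
  if v == 1 then 2 else if v == 2 then 1 else if 2 < v < m.+3 then m + 5 - v else v.

Lemma sigma_fun_lt v : v < n -> sigma_fun v < n.
Proof. by rewrite /sigma_fun; do ![case: ifP => /= ?]; lia. Qed.

Lemma sigma_funK v : v < n -> sigma_fun (sigma_fun v) = v.
Proof.
move=> lt_v; rewrite {2}/sigma_fun; do ![case: ifP => ?].
all: by rewrite /sigma_fun /=; do ?[case: ifP => ?]; lia.
Qed.

Definition sigma : {perm 'I_n} := perm_involution sigma_fun_lt sigma_funK.

Lemma sigma_small : (sigma e1 = e1) * (sigma en = en) * (sigma e2 = e3) * (sigma e3 = e2).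
Proof.
have sigmaE (i j : 'I_n) : sigma_fun i = j -> sigma i = j.
  by move=> ij; apply: val_inj; rewrite /= perm_involutionE.
by do !split; apply: sigmaE; rewrite /sigma_fun /= ?ltnn ?andbF.
Qed.

(* sigma reverses every edge of the cycle (1 n 2 3 ...) except 1 -> n,
   n -> 2, 3 -> s 3 and the edge back to 1; the potential [x < 3], that is
   x in {1, 2, 3}, accounts for them. *)
Lemma sigma_edges s : s e1 = en -> s en = e2 -> s e2 = e3 -> s e3 != e1 ->
  forall x, ((sigma (s x) < sigma x) + (x < 3) = (x < s x) + (s x < 3))%N /\
            ((sigma x < sigma (s x)) + (s x < 3) = (s x < x) + (x < 3))%N.
Proof.
move=> E1 En E2 E3 x.
have sE y : (s x == s y) = (x == y) := inj_eq (@perm_inj _ s) _ _.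
have A : (s x == en) = (x == e1) by rewrite -E1 sE.
have B : (s x == e2) = (x == en) by rewrite -En sE.
have C : (s x == e3) = (x == e2) by rewrite -E2 sE.
have D : x == e3 -> s x != e1 by move/eqP->.
have := ltn_ord x; have := ltn_ord (s x); rewrite !perm_involutionE /sigma_fun.
move: A B C D; rewrite -!(inj_eq (@ord_inj n)) /=.
by do ![case: ifP => ?]; lia.
Qed.

Lemma cyc_factor1E s (j : 'I_n) : cyc_factor s 1 j.+1 = (s e1 == en) && (s en == j).
Proof.
apply/existsP/andP => [[x /existsP[y /and4P[/eqP x1 /eqP yn /eqP sx /eqP[/val_inj sy]]]] |].
  have Ex : x = e1 by apply: val_inj; rewrite /=; lia.
  have Ey : y = en by apply: val_inj; rewrite /=; lia.
  by rewrite -Ex -Ey sx sy !eqxx.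
by case=> /eqP s1 /eqP sn; exists e1; apply/existsP; exists en; rewrite s1 sn !eqxx.
Qed.

Lemma four_cycle_not_odd s : s e1 = en -> s en = e2 -> s e2 = e3 -> s e3 = e1 -> ~~ odd_order s.
Proof.
move=> E1 En E2 E3; have sC : porbit s e1 \in porbits s by apply: imset_f.
apply/negP => /forall_inP/(_ _ sC); rewrite (@card_porbit_period _ s e1 4) //=.
  by rewrite E1 En E2 E3.
by rewrite E1 En E2 !inE.
Qed.

Lemma cyclic_weight_sigma s : odd_order s -> s e1 = en -> s en = e2 -> s e2 = e3 ->
  cyclic_weight (s ^ sigma)%g = cyclic_weight s.
Proof.
move=> odd_s E1 En E2; have E3 : s e3 != e1.
  by apply/eqP => E3; move: odd_s; apply/negP; exact: four_cycle_not_odd E1 En E2 E3.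
apply: (cyclic_weightJ_potential (phi := fun x => x < 3)) => x;
  by have [] := sigma_edges E1 En E2 E3 x.
Qed.

Lemma cyclic_weight_tau s : s e2 != e3 -> s e3 != e2 ->
  cyclic_weight (s ^ tau)%g = cyclic_weight s.
Proof.
move=> N23 N32; apply: cyclic_weightJ_step => x; apply: step_tperm => //.
  by apply/negP => /andP[/eqP-> /eqP sx]; rewrite sx eqxx in N23.
by apply/negP => /andP[/eqP-> /eqP sx]; rewrite sx eqxx in N32.
Qed.

Lemma p_eq d : p n d 1 2 = p n d 1 3.
Proof.
have [[[s1 sn] s2] s3] := sigma_small; have [[[t1 tn] t2] t3] := tau_small.
rewrite /p [LHS](card_setID _ (fun s => s e2 == e3)) [RHS](card_setID _ (fun s => s e3 == e2)).
congr (_ + _); apply/esym.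
  apply: card_set_transport (conjg_inj sigma) _ => s.
  rewrite (cyc_factor1E _ e2) (cyc_factor1E _ e3) odd_orderJ.
  rewrite (permJ_eq _ s1 sn) (permJ_eq _ sn s2) (permJ_eq _ s2 s3).
  have [E1|_] := eqVneq (s e1) en; last by rewrite /= !andbF.
  have [En|_] := eqVneq (s en) e2; last by rewrite /= !andbF.
  have [E2|_] := eqVneq (s e2) e3; last by rewrite /= !andbF.
  by case: (boolP (odd_order s)) => //= odd_s; rewrite cyclic_weight_sigma.
apply: card_set_transport (conjg_inj tau) _ => s.
rewrite (cyc_factor1E _ e2) (cyc_factor1E _ e3) odd_orderJ.
rewrite (permJ_eq _ t1 tn) (permJ_eq _ tn t2) (permJ_eq _ t2 t3).
have [_|_] := eqVneq (s e1) en; last by rewrite /= !andbF.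
have [En|_] := eqVneq (s en) e2; last by rewrite /= !andbF.
have [_|N23] := eqVneq (s e2) e3; first by rewrite /= !andbF.
by rewrite cyclic_weight_tau // -En (inj_eq (@perm_inj _ s)).
Qed.

End SmallValues.

Theorem proposition4p3 (n : nat) (d : int) :
  4 <= n ->
  b n d 1 2 + b n d 2 1 = 2 * p n d 1 2 ->
  b n d 1 3 + b n d 3 1 = 2 * p n d 1 3.
Proof.
case: n => [|[|[|[|m]]]] // _.
by rewrite ballot_sum p_eq.
Qed.
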